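(* Let $k\ge1$ and $\varepsilon>0$. Suppose $\mathcal{A}$ is a quantum algorithm making $T$ queries to an unknown $n$-qubit unitary (and/or its inverse) which is a $(k,\sqrt{\varepsilon/2})$-quantum junta tester, i.e. for every $U\in\mathcal{U}_N$ it outputs, with probability at least $9/10$, ''Yes'' if $U$ is a quantum $k$-junta and ''No'' if $U$ is $\sqrt{\varepsilon/2}$-far from every quantum $k$-junta. Then $\mathcal{A}$, run with the oracle $U_f=\mathrm{diag}\big((-1)^{f(x)}\big)_{x\in\{0,1\}^n}$, is a $T$-query $(k,\varepsilon)$-classical junta tester: for every Boolean function $f:\{0,1\}^n\to\{0,1\}$ it outputs, with probability at least $9/10$, ''Yes'' if $f$ is a $k$-junta and ''No'' if $f$ is $\varepsilon$-far from every $k$-junta.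
   Context: $N=2^n$, $\mathcal{U}_N$ is the set of $N\times N$ unitaries. A unitary $U\in\mathcal{U}_N$ is a quantum $k$-junta if $U=V_S\otimes I_{\overline{S}}$ for some $S\subseteq[n]$ with $|S|=k$ and some $V_S\in\mathcal{U}_{2^k}$ acting on the qubits in $S$. For $A,B\in\mathbb{C}^{N\times N}$, $\mathrm{dist}(A,B):=\min_{\theta\in[0,2\pi)}\frac{1}{\sqrt{2N}}\|e^{i\theta}A-B\|$ with $\|\cdot\|$ the Frobenius norm; $U$ is $\delta$-far from every quantum $k$-junta if $\mathrm{dist}(U,V)\ge\delta$ for all quantum $k$-juntas $V$. A Boolean function $f:\{0,1\}^n\to\{0,1\}$ is a $k$-junta if $f(x)=g(x_{i_1},\dots,x_{i_k})$ for some $g:\{0,1\}^k\to\{0,1\}$ and fixed indices $i_1,\dots,i_k$; for Boolean functions $\mathrm{dist}(f,g):=\Pr_{x}[f(x)\neq g(x)]$ with $x$ uniform on $\{0,1\}^n$, and $f$ is $\varepsilon$-far from every $k$-junta if $\mathrm{dist}(f,g)\ge\varepsilon$ for every $k$-junta $g$. $U_f$ is the diagonal $N\times N$ matrix with diagonal entries $(-1)^{f(x)}$. *)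

From HB Require Import structures.
From mathcomp Require Import all_boot all_order all_algebra.
From mathcomp Require Import spectral sesquilinear.
From mathcomp Require Import reals.
From mathcomp Require Import trigo.
From mathcomp Require Import complex mxtens.

Set Implicit Arguments.
Unset Strict Implicit.
Unset Printing Implicit Defensive.

Import Order.TTheory GRing.Theory Num.Theory.
Local Open Scope ring_scope.
Local Open Scope complex_scope.
Local Open Scope sesquilinear_scope.

Section QJunta.
Variable R : realType.
Local Notation C := R[i].

(* Computational basis of n qubits: the basis vector with index x : 'I_(2^n)
   is |x_0 x_1 ... x_{n-1}>, where qubit j carries bit j of x (binary expansion). *)
Definition bit (x j : nat) : bool := odd (x %/ 2 ^ j).

Lemma pow2_gt0 (k : nat) : (0 < 2 ^ k)%N.
Proof. by rewrite expn_gt0. Qed.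

(* Restriction of the basis index x to the qubits in S (in increasing order),
   read as an index of the 2^|S|-dimensional space of the qubits in S.
   (The value is already < 2^|S|, the modulo only provides the ordinal bound.) *)
Definition restr_nat (n : nat) (S : {set 'I_n}) (x : nat) : nat :=
  \sum_(i < #|S|) (bit x (nth 0%N [seq val j | j <- enum S] i)) * 2 ^ i.

Definition restr (n : nat) (S : {set 'I_n}) (x : nat) : 'I_(2 ^ #|S|) :=
  Ordinal (ltn_pmod (restr_nat S x) (pow2_gt0 #|S|)).

(* V_S (x) I_{\bar S}: the operator acting as V on the qubits in S and as the
   identity on the other qubits. *)
Definition tens_on (n : nat) (S : {set 'I_n}) (V : 'M[C]_(2 ^ #|S|)) : 'M[C]_(2 ^ n) :=
  \matrix_(x, y)
    (if [forall j : 'I_n, (j \notin S) ==> (bit x j == bit y j)]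
     then V (restr S x) (restr S y) else 0).

Definition qjunta (n k : nat) (U : 'M[C]_(2 ^ n)) : Prop :=
  exists (S : {set 'I_n}) (V : 'M[C]_(2 ^ #|S|)),
    #|S| = k /\ V \is unitarymx /\ U = tens_on V.

Definition frob (m : nat) (A : 'M[C]_m) : R :=
  Num.sqrt (\sum_(i < m) \sum_(j < m) Normc.normc (A i j) ^+ 2).

Definition expi (t : R) : C := cos t +i* sin t.

(* dist(A,B) >= d, where dist(A,B) = min_{theta in [0,2pi)} ||e^{i theta}A - B|| / sqrt(2N). *)
Definition dist_ge (N : nat) (A B : 'M[C]_N) (d : R) : Prop :=
  forall t : R, 0 <= t -> t < 2 * pi ->
    d <= (Num.sqrt (2 * N%:R))^-1 * frob (expi t *: A - B).

Definition qfar (n k : nat) (U : 'M[C]_(2 ^ n)) (d : R) : Prop :=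
  forall V : 'M[C]_(2 ^ n), qjunta k V -> dist_ge U V d.

(* Boolean functions on {0,1}^n, the input x being the index x : 'I_(2^n)
   with bits x_j = bit x j. *)
Definition cjunta (n k : nat) (f : 'I_(2 ^ n) -> bool) : Prop :=
  exists (idx : 'I_k -> 'I_n) (g : {ffun 'I_k -> bool} -> bool),
    forall x : 'I_(2 ^ n), f x = g [ffun m => bit x (idx m)].

Definition cdist (n : nat) (f g : 'I_(2 ^ n) -> bool) : R :=
  #|[set x : 'I_(2 ^ n) | f x != g x]|%:R / (2 ^ n)%:R.

Definition cfar (n k : nat) (f : 'I_(2 ^ n) -> bool) (e : R) : Prop :=
  forall g : 'I_(2 ^ n) -> bool, cjunta k g -> e <= cdist f g.

Definition Uf (n : nat) (f : 'I_(2 ^ n) -> bool) : 'M[C]_(2 ^ n) :=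
  diag_mx (\row_x (- 1) ^+ f x).

(* A T-query quantum algorithm on n system qubits plus a ancilla qubits:
   unitaries G 0, ..., G T interleaved with T queries; query number t
   (t = 0..T-1) applies U (x) I, or U^{-1} (x) I = U^* (x) I when inv t = true.
   Start in |0...0>, end with a measurement in the computational basis,
   answering "Yes" iff the outcome lies in acc. *)
Record qalg (n T : nat) := QAlg {
  anc : nat;
  gate : nat -> 'M[C]_(2 ^ n * 2 ^ anc);
  inv : nat -> bool;
  acc : {set 'I_(2 ^ n * 2 ^ anc)}
}.

Definition qalg_wf (n T : nat) (A : qalg n T) : Prop :=
  forall t, (t <= T)%N -> gate A t \is unitarymx.

Definition oracle (n : nat) (b : bool) (U : 'M[C]_(2 ^ n)) : 'M[C]_(2 ^ n) :=
  if b then U ^t* else U.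

Fixpoint qstate (n T : nat) (A : qalg n T) (U : 'M[C]_(2 ^ n)) (t : nat)
  : 'cV[C]_(2 ^ n * 2 ^ anc A) :=
  match t with
  | 0 => gate A 0 *m \col_i (nat_of_ord i == 0%N)%:R
  | t'.+1 => gate A t *m ((oracle (inv A t') U *t (1%:M : 'M[C]_(2 ^ anc A)))
                          *m qstate A U t')
  end.

Definition pyes (n T : nat) (A : qalg n T) (U : 'M[C]_(2 ^ n)) : R :=
  \sum_(i in acc A) Normc.normc (qstate A U T i 0) ^+ 2.

Definition qtester (n T k : nat) (A : qalg n T) (d : R) : Prop :=
  forall U : 'M[C]_(2 ^ n), U \is unitarymx ->
    (qjunta k U -> 9 / 10 <= pyes A U) /\
    (qfar k U d -> 9 / 10 <= 1 - pyes A U).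

Definition ctester (n T k : nat) (A : qalg n T) (e : R) : Prop :=
  forall f : 'I_(2 ^ n) -> bool,
    (cjunta k f -> 9 / 10 <= pyes A (Uf f)) /\
    (cfar k f e -> 9 / 10 <= 1 - pyes A (Uf f)).

End QJunta.

From HB Require Import structures.
From mathcomp Require Import all_boot all_order all_algebra.
From mathcomp Require Import spectral sesquilinear reals trigo complex mxtens.
From mathcomp Require Import zify ring lra.
Import Order.TTheory GRing.Theory Num.Theory.

Set Implicit Arguments.
Unset Strict Implicit.
Unset Printing Implicit Defensive.

(* U_f is unitary, so the quantum tester's guarantees apply to it; it remains
   to see that U_f inherits the property being tested.  If f only reads the
   coordinates idx, then U_f = V_S (x) I for every k-set S containing idx, with
   V_S the diagonal sign matrix of f restricted to S.  If f is e-far from every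
   k-junta, fix a quantum k-junta V_S (x) I and a phase t.  The Boolean function
   g x = [Re (e^{-it} V_S (x_S, x_S)) < 0] is a k-junta, and wherever
   f x <> g x the diagonal entry of e^{it} U_f - V_S (x) I has modulus at
   least 1.  So the squared Frobenius norm of that difference is at least
   e 2^n, i.e. the distance is at least sqrt (e / 2). *)

Lemma bitsum_recl (b : nat -> bool) s :
  \sum_(i < s.+1) b i * 2 ^ i = b 0 + (\sum_(i < s) b i.+1 * 2 ^ i) * 2.
Proof.
rewrite big_ord_recl /= expn0 muln1 big_distrl /=; congr (_ + _).
by apply: eq_bigr => i _; rewrite /bump /= add1n expnS mulnCA mulnC.
Qed.

Lemma bitsum_lt (b : nat -> bool) s : \sum_(i < s) b i * 2 ^ i < 2 ^ s.
Proof.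
elim: s b => [|s IH] b; first by rewrite big_ord0.
rewrite bitsum_recl expnS; have := IH (fun i => b i.+1).
by case: (b 0) => /=; lia.
Qed.

Lemma bit_bitsum (b : nat -> bool) s i :
  i < s -> bit (\sum_(j < s) b j * 2 ^ j) i = b i.
Proof.
elim: s b i => [|s IH] b [|i] //= lt_is; rewrite bitsum_recl /bit.
  by rewrite expn0 divn1 oddD oddM andbF addbF oddb.
rewrite expnS divnMA (_ : (b 0 + _ * 2) %/ 2 = \sum_(j < s) b j.+1 * 2 ^ j).
  exact: (IH (fun j => b j.+1)).
by case: (b 0) => /=; lia.
Qed.

Lemma bits_inj n x y : x < 2 ^ n -> y < 2 ^ n ->
  (forall j, j < n -> bit x j = bit y j) -> x = y.
Proof.
elim: n x y => [|n IH] x y; first by rewrite expn0; case: x => //; case: y.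
move=> lt_x lt_y eq_bits; rewrite (divn_eq x 2) (divn_eq y 2) !modn2.
have := eq_bits 0 isT; rewrite /bit expn0 !divn1 => ->; congr (_ * _ + _).
apply: IH; rewrite ?ltn_divLR // -?expnSr //.
by move=> j lt_jn; have := eq_bits j.+1 lt_jn; rewrite /bit expnS !divnMA.
Qed.

Lemma exists_superset_card (T : finType) (A : {set T}) m :
  #|A| <= m -> m <= #|T| -> exists2 B : {set T}, A \subset B & #|B| = m.
Proof.
elim: m => [|m IH] le_Am le_mT.
  by exists A => //; apply/eqP; rewrite -leqn0.
have [lt_Am|gt_Am|eq_Am] := ltngtP #|A| m.+1;
  [|by rewrite ltnNge le_Am in gt_Am|by exists A].
have [B sub_AB card_B] := IH lt_Am (ltnW le_mT).
have /properP[_ [x _ Bx]] : B \proper setT.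
  rewrite properT; apply: contraTneq le_mT => eq_B.
  by rewrite -cardsT -eq_B card_B ltnn.
exists (x |: B); first exact: subset_trans sub_AB (subsetUr _ _).
by rewrite cardsU1 Bx card_B.
Qed.

Lemma bit_restr n (S : {set 'I_n}) x (j : 'I_n) :
  j \in S -> bit (restr S x) (index j (enum S)) = bit x j.
Proof.
move=> jS; pose b i := bit x (nth 0 [seq val j | j <- enum S] i).
have restrE : restr S x = \sum_(i < #|S|) b i * 2 ^ i :> nat.
  by apply/modn_small; exact: (bitsum_lt b).
rewrite restrE bit_bitsum ?cardE ?index_mem ?mem_enum // /b.
by rewrite (nth_map j) ?nth_index ?index_mem ?mem_enum.
Qed.

Lemma restr_inj n (S : {set 'I_n}) (x y : 'I_(2 ^ n)) :
  restr S x = restr S y -> (forall j, j \notin S -> bit x j = bit y j) -> x = y.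
Proof.
move=> eq_restr eq_off; apply: val_inj.
apply: (bits_inj (ltn_ord x) (ltn_ord y)) => j lt_jn.
have [jS|jS] := boolP (Ordinal lt_jn \in S); last exact: eq_off jS.
by rewrite -(bit_restr x jS) -(bit_restr y jS) eq_restr.
Qed.

Lemma cjunta_restr n (S : {set 'I_n}) (h : 'I_(2 ^ #|S|) -> bool) :
  cjunta #|S| (fun x : 'I_(2 ^ n) => h (restr S x)).
Proof.
pose bitsum (b : {ffun 'I_#|S| -> bool}) := \sum_(i < #|S|) b i * 2 ^ i.
exists enum_val, (fun b => h (Ordinal (ltn_pmod (bitsum b) (pow2_gt0 #|S|)))).
move=> x; congr h; apply: val_inj; congr (_ %% _); apply: eq_bigr => i _.
by rewrite ffunE (nth_map (enum_val i)) -?cardE // -enum_val_nth.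
Qed.

Section JuntaTransfer.
Variable R : realType.
Local Notation C := R[i].
Local Open Scope ring_scope.
Local Open Scope complex_scope.

Lemma diag_unitarymx m (d : 'rV[C]_m) :
  (forall i, d 0 i * (d 0 i)^* = 1) -> diag_mx d \is unitarymx.
Proof.
move=> d_unit; apply/unitarymxP/matrixP => i j; rewrite mul_diag_mx !mxE.
by case: eqVneq => [<-|_] /=; rewrite ?mulr1n ?d_unit // mulr0n rmorph0 mulr0.
Qed.

Lemma Uf_unitary n (f : 'I_(2 ^ n) -> bool) : Uf R f \is unitarymx.
Proof.
apply: diag_unitarymx => i; rewrite mxE.
by case: (f i); rewrite ?expr0 ?expr1 ?rmorphN ?rmorph1 ?mulrNN mulr1.
Qed.

Lemma tens_on_diag n (S : {set 'I_n}) (V : 'M[C]_(2 ^ #|S|)) x :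
  tens_on V x x = V (restr S x) (restr S x).
Proof. by rewrite mxE ifT //; apply/forallP => j; apply/implyP. Qed.

Lemma tens_on_diag_mx n (S : {set 'I_n}) (d : 'rV[C]_(2 ^ #|S|)) :
  tens_on (diag_mx d) = diag_mx (\row_x d 0 (restr S x)).
Proof.
apply/matrixP => x y; have [<-|ne_xy] := eqVneq x y.
  by rewrite tens_on_diag !mxE !eqxx.
rewrite !mxE (negbTE ne_xy) mulr0n; case: ifP => // /forallP eq_off.
rewrite (_ : (restr S x == restr S y) = false) ?mulr0n //.
apply: contraNF ne_xy => /eqP eq_restr; apply/eqP/(restr_inj eq_restr) => j jS.
exact/eqP/(implyP (eq_off j)).
Qed.

Lemma Uf_qjunta n k (f : 'I_(2 ^ n) -> bool) :
  (k <= n)%N -> cjunta k f -> qjunta k (Uf R f).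
Proof.
move=> le_kn [idx [g f_g]].
(* A quantum k-junta acts on exactly k qubits: pad the coordinates read by f. *)
have le_idx_k : (#|[set idx m | m in 'I_k]| <= k)%N.
  by rewrite -[k in (_ <= k)%N]card_ord leq_imset_card.
have le_k_In : (k <= #|'I_n|)%N by rewrite card_ord.
have [S sub_S card_S] := exists_superset_card le_idx_k le_k_In.
pose gS (a : 'I_(2 ^ #|S|)) := g [ffun m => bit a (index (idx m) (enum S))].
exists S, (Uf R gS); split=> //; split; first exact: Uf_unitary.
rewrite [Uf R gS]/Uf tens_on_diag_mx; congr diag_mx; apply/rowP => x.
rewrite !mxE f_g; congr (_ ^+ g _); apply/ffunP => m.
by rewrite !ffunE bit_restr //; apply/(subsetP sub_S)/imset_f.
Qed.

(* |z s - w|^2 = 1 - 2 s Re (z^* w) + |w|^2 for |z| = 1 and a sign s. *)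
Lemma normc_sign_sub_ge1 (c s a b : R) (sgn : bool) :
  c ^+ 2 + s ^+ 2 = 1 -> sgn != (c * a + s * b < 0) ->
  1 <= Normc.normc ((c +i* s) * (-1) ^+ sgn - (a +i* b)) ^+ 2.
Proof.
move=> cs1; case: (ltrP (c * a + s * b) 0); case: sgn => //= ? _;
  rewrite sqr_sqrtr ?addr_ge0 ?sqr_ge0 //; nra.
Qed.

Lemma card_le_frob m (M : 'M[C]_m) (P : {set 'I_m}) :
  (forall i, i \in P -> 1 <= Normc.normc (M i i) ^+ 2) ->
  #|P|%:R <= frob M ^+ 2.
Proof.
move=> P_ge1; rewrite /frob sqr_sqrtr; last first.
  by apply: sumr_ge0 => i _; apply: sumr_ge0 => j _; exact: sqr_ge0.
rewrite -sum1_card natr_sum big_mkcond; apply: ler_sum => i _.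
case: ifP => [Pi|_]; last by apply: sumr_ge0 => j _; exact: sqr_ge0.
rewrite (bigD1 i) //= (le_trans (P_ge1 i Pi)) // lerDl.
by apply: sumr_ge0 => j _; exact: sqr_ge0.
Qed.

Lemma sqrt_half_le_normalized (N e x : R) :
  0 < N -> 0 <= x -> e * N <= x ^+ 2 ->
  Num.sqrt (e / 2) <= (Num.sqrt (2 * N))^-1 * x.
Proof.
move=> N_gt0 x_ge0 le_eNx; have N_ge0 := ltW N_gt0.
rewrite -(ger0_norm x_ge0) -sqrtr_sqr -sqrtrV ?mulr_ge0 //.
rewrite -sqrtrM ?invr_ge0 ?mulr_ge0 //.
rewrite ler_sqrt ?mulr_ge0 ?invr_ge0 ?sqr_ge0 ?mulr_ge0 //.
have -> : (2 * N)^-1 * x ^+ 2 = x ^+ 2 / N / 2 by field; exact: lt0r_neq0.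
by rewrite ler_pM2r ?invr_gt0 ?ltr0n // ler_pdivlMr.
Qed.

Lemma Uf_qfar n k (f : 'I_(2 ^ n) -> bool) (e : R) :
  cfar k f e -> qfar k (Uf R f) (Num.sqrt (e / 2)).
Proof.
move=> f_far _ [S [V [card_S [_ ->]]]] t _ _; subst k.
pose h (a : 'I_(2 ^ #|S|)) :=
  cos t * complex.Re (V a a) + sin t * complex.Im (V a a) < 0.
pose g x := h (restr S x).
set M := expi t *: Uf R f - tens_on V.
have mismatch_le : #|[set x | f x != g x]|%:R <= frob M ^+ 2.
  apply: card_le_frob => x; rewrite inE /M mxE [(- tens_on V) x x]mxE.
  rewrite tens_on_diag !mxE eqxx mulr1n /g /h.
  case: (V _ _) => a b /= ne_fg.
  by apply: normc_sign_sub_ge1 => //; exact: cos2Dsin2.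
have := f_far g (cjunta_restr h).
rewrite /cdist ler_pdivlMr ?ltr0n ?expn_gt0 // => le_e.
apply: sqrt_half_le_normalized (le_trans le_e mismatch_le).
  by rewrite ltr0n expn_gt0.
exact: sqrtr_ge0.
Qed.

End JuntaTransfer.

Local Open Scope ring_scope.

Theorem mainTheorem2 (R : realType) (n k T : nat) (e : R) (A : qalg R n T) :
  (1 <= k)%N -> (k <= n)%N -> 0 < e -> qalg_wf A ->
  qtester k A (Num.sqrt (e / 2)) ->
  ctester k A e.
Proof.
move=> _ le_kn _ _ tester f.
have [accept_junta reject_far] := tester _ (Uf_unitary R f).
split=> [f_junta | f_far]; first exact/accept_junta/Uf_qjunta.
exact/reject_far/Uf_qfar.
Qed.
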